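(* For every $n\in\mathbb{Z}_{\ge0}$ the following identity of polynomials in $x$ holds: $$\sum_{j=0}^{n}x^{j}\prod_{m=1}^{n-j}\Big(x-\frac1m\Big)=(n+1)\prod_{m=2}^{n+1}\Big(x-\frac1m\Big),$$ where empty products equal $1$. *)

From mathcomp Require Import all_boot all_order all_algebra.

From mathcomp Require Import all_boot all_order all_algebra.
From mathcomp Require Import ring.
Import GRing.Theory Num.Theory.
Local Open Scope ring_scope.

(* Writing S_n for the left-hand side and Q_n for the product on the right,
   the sum obeys the Horner recursion S_(n+1) = (x - 1) Q_n + x S_n, while
   Q_(n+1) = Q_n (x - 1/(n+2)); induction then reduces the identity to
   (x - 1) + (n+1) x = (n+2) (x - 1/(n+2)). *)

Lemma sum_exp_mul_rev_recl (R : pzSemiRingType) (x : R) (a : nat -> R) n :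
  \sum_(0 <= j < n.+2) x ^+ j * a (n.+1 - j)%N
  = a n.+1 + x * \sum_(0 <= j < n.+1) x ^+ j * a (n - j)%N.
Proof.
rewrite big_nat_recl // expr0 mul1r subn0 big_distrr /=.
by congr (_ + _); apply: eq_bigr => j _; rewrite exprS subSS mulrA.
Qed.

Section InverseRootProducts.

Variable F : numFieldType.

Definition prod_XsubC_inv (lo hi : nat) : {poly F} :=
  \prod_(lo <= m < hi) ('X - (m%:R)^-1%:P).

Lemma natr_mul_XsubC_inv (k : nat) :
  k.+1%:R%:P * ('X - (k.+1%:R)^-1%:P) = k.+1%:R%:P * 'X - 1 :> {poly F}.
Proof. by rewrite mulrBr -polyCM mulfV ?pnatr_eq0. Qed.

Lemma sum_X_prod_XsubC_inv n :
  \sum_(0 <= j < n.+1) 'X ^+ j * prod_XsubC_inv 1 (n - j).+1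
  = n.+1%:R%:P * prod_XsubC_inv 2 n.+2.
Proof.
elim: n => [|n IH]; first by rewrite big_nat1 /prod_XsubC_inv !big_geq.
rewrite (sum_exp_mul_rev_recl _ _ (fun k => prod_XsubC_inv 1 k.+1)) IH.
rewrite /prod_XsubC_inv (big_ltn (m := 1%N)) // [in RHS]big_nat_recr //=.
rewrite [RHS]mulrCA natr_mul_XsubC_inv invr1 -[n.+2%:R]natr1 polyCD polyC1.
ring.
Qed.

End InverseRootProducts.

Theorem mainTheorem7 (n : nat) :
  \sum_(0 <= j < n.+1)
     ('X ^+ j * \prod_(1 <= m < (n - j).+1) ('X - (m%:R)^-1%:P))
  = (n.+1)%:R%:P * \prod_(2 <= m < n.+2) ('X - (m%:R)^-1%:P) :> {poly rat}.
Proof. exact: sum_X_prod_XsubC_inv. Qed.
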